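(* Let $A\in H_n$ and $B\in H_k$ be neither positive semidefinite nor negative semidefinite, with $\|A_+\|_\infty\geq\|B_+\|_\infty$ and $\|A_-\|_\infty\geq\|B_-\|_\infty$. Then there exists a positive unital linear map $\Phi:H_n\to H_k$ such that $\Phi(A)=B$.
   Context: $H_n$ denotes the $n\times n$ complex Hermitian matrices. A linear map $\Phi:H_n\to H_k$ is positive if it maps positive semidefinite matrices to positive semidefinite matrices and unital if $\Phi(\mathbb{1})=\mathbb{1}$. Every $A$ decomposes uniquely as $A=A_+-A_-$ with $A_\pm$ positive semidefinite and $A_+A_-=0$. $\|\cdot\|_\infty$ is the operator norm. *)

From HB Require Import structures.
From mathcomp Require Import all_boot all_order all_algebra.
From mathcomp Require Import complex.
From mathcomp Require Import reals classical_sets.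
Set Implicit Arguments.
Unset Strict Implicit.
Unset Printing Implicit Defensive.
Import Order.TTheory GRing.Theory Num.Theory.
Local Open Scope ring_scope.
Local Open Scope classical_set_scope.

Section Defs.
Variable R : realType.
Local Notation C := R[i].

Definition adjmx m n (M : 'M[C]_(m, n)) : 'M[C]_(n, m) := map_mx Num.conj M^T.

Definition herm n (A : 'M[C]_n) : Prop := A \is hermsymmx.

Definition psd n (A : 'M[C]_n) : Prop :=
  herm A /\ forall v : 'cV[C]_n, 0 <= (adjmx v *m A *m v) 0 0.

Definition nsd n (A : 'M[C]_n) : Prop := psd (- A).

Definition vnorm n (v : 'cV[C]_n) : R :=
  Num.sqrt (\sum_(i < n) ((complex.Re (v i 0)) ^+ 2 + (complex.Im (v i 0)) ^+ 2)).

Definition opnorm m n (M : 'M[C]_(m, n)) : R :=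
  sup [set vnorm (M *m v) | v in [set v : 'cV[C]_n | vnorm v <= 1]].

Definition jordan_decomp n (A Ap Am : 'M[C]_n) : Prop :=
  [/\ psd Ap, psd Am, A = Ap - Am & Ap *m Am = 0].

(* Phi : H_n -> H_k, represented as a function on all matrices whose values
   outside H_n are irrelevant: it maps H_n into H_k and is R-linear on H_n. *)
Definition herm_linear n k (Phi : 'M[C]_n -> 'M[C]_k) : Prop :=
  (forall X, herm X -> herm (Phi X)) /\
  (forall (r : R) (X Y : 'M[C]_n), herm X -> herm Y ->
     Phi ((r%:C)%C *: X + Y) = (r%:C)%C *: Phi X + Phi Y).

Definition positive_map n k (Phi : 'M[C]_n -> 'M[C]_k) : Prop :=
  forall X, psd X -> psd (Phi X).

Definition unital_map n k (Phi : 'M[C]_n -> 'M[C]_k) : Prop :=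
  Phi 1%:M = 1%:M.

End Defs.

From HB Require Import structures.
From mathcomp Require Import all_boot all_order all_algebra.
From mathcomp Require Import complex.
From mathcomp Require Import reals classical_sets.
From mathcomp Require Import ring.
Import Order.TTheory GRing.Theory Num.Theory.
Local Open Scope ring_scope.

(* Let a = ||A_+|| and b = ||A_-|| be attained at unit eigenvectors u1 of A_+
   and u2 of A_-.  As A is neither psd nor nsd, a, b > 0, so A_+ A_- = 0 forces
   A_- u1 = 0 and A_+ u2 = 0, whence <u1, A u1> = a and <u2, A u2> = -b.  The
   measure-and-prepare map
     Phi X = <u1, X u1> (B + b)/(a + b) + <u2, X u2> (a - B)/(a + b)
   is unital and sends A to B; it is positive because
   -b <= -||B_-|| <= B <= ||B_+|| <= a makes both matrix coefficients psd. *)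

Set Implicit Arguments.
Unset Strict Implicit.
Unset Printing Implicit Defensive.

Lemma shift_combination (F : comNzRingType) k (a b t : F) (B : 'M[F]_k) :
  t * (a + b) = 1 -> a *: (t *: (B + b *: 1%:M)) + - b *: (t *: (- B + a *: 1%:M)) = B.
Proof.
move=> tab; apply/matrixP => i j; rewrite !mxE.
by transitivity (t * (a + b) * B i j); [ring | rewrite tab mul1r].
Qed.

Section HermitianMatrices.
Variable R : realType.
Local Notation C := R[i].

Lemma adjmxK m n (M : 'M[C]_(m, n)) : adjmx (adjmx M) = M.
Proof. exact: trmxCK. Qed.

Lemma adjmxM m n p (M : 'M[C]_(m, n)) (N : 'M[C]_(n, p)) :
  adjmx (M *m N) = adjmx N *m adjmx M.
Proof. by rewrite /adjmx trmx_mul map_mxM. Qed.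

Lemma adjmxD m n (M N : 'M[C]_(m, n)) : adjmx (M + N) = adjmx M + adjmx N.
Proof. by rewrite /adjmx linearD /= map_mxD. Qed.

Lemma adjmxZ m n (c : C) (M : 'M[C]_(m, n)) : adjmx (c *: M) = c^* *: adjmx M.
Proof. by apply/matrixP=> i j; rewrite !mxE rmorphM. Qed.

Lemma adjmx1 n : adjmx (1%:M : 'M[C]_n) = 1%:M.
Proof. by rewrite /adjmx trmx1 map_mx1. Qed.

Lemma hermE n (M : 'M[C]_n) : herm M <-> adjmx M = M.
Proof.
rewrite /herm; split; first by move/is_hermitianmxP; rewrite expr0 scale1r.
by move=> h; apply/is_hermitianmxP; rewrite expr0 scale1r; exact: (esym h).
Qed.

Lemma hermD n (M N : 'M[C]_n) : herm M -> herm N -> herm (M + N).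
Proof. by move=> /hermE hM /hermE hN; apply/hermE; rewrite adjmxD hM hN. Qed.

Lemma hermN n (M : 'M[C]_n) : herm M -> herm (- M).
Proof.
move=> /hermE hM; apply/hermE.
by rewrite -scaleN1r adjmxZ hM rmorphN1 scaleN1r.
Qed.

Lemma hermZ n (c : C) (M : 'M[C]_n) : c^* = c -> herm M -> herm (c *: M).
Proof. by move=> cc /hermE hM; apply/hermE; rewrite adjmxZ cc hM. Qed.

Lemma herm1 n : herm (1%:M : 'M[C]_n).
Proof. exact/hermE/adjmx1. Qed.

Lemma mul_adjmx_unitarymx n (U : 'M[C]_n) : U \is unitarymx -> adjmx U *m U = 1%:M.
Proof. by move=> Uu; have := @mulmxKtV _ n n n 1%:M U Uu erefl; rewrite mul1mx. Qed.

Definition qform n (M : 'M[C]_n) (v : 'cV[C]_n) : C := (adjmx v *m M *m v) 0 0.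

Section QuadraticForm.
Variable n : nat.
Implicit Types (M N : 'M[C]_n) (v w : 'cV[C]_n).

Lemma qformD M N v : qform (M + N) v = qform M v + qform N v.
Proof. by rewrite /qform mulmxDr mulmxDl mxE. Qed.

Lemma qformZ (c : C) M v : qform (c *: M) v = c * qform M v.
Proof. by rewrite /qform -scalemxAr -scalemxAl mxE. Qed.

Lemma qformN M v : qform (- M) v = - qform M v.
Proof. by rewrite -scaleN1r qformZ mulN1r. Qed.

Lemma qform_eigen M v (c : C) : M *m v = c *: v -> qform M v = c * qform 1%:M v.
Proof. by move=> Mv; rewrite /qform mulmx1 -mulmxA Mv -scalemxAr mxE. Qed.

Lemma qform_eq0 M v : M *m v = 0 -> qform M v = 0.
Proof. by move=> Mv; rewrite /qform -mulmxA Mv mulmx0 mxE. Qed.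

Lemma qform_conj M v : herm M -> (qform M v)^* = qform M v.
Proof.
move=> /hermE hM; rewrite /qform -{2}hM.
transitivity (adjmx (adjmx v *m M *m v) 0 0); first by rewrite !mxE.
by rewrite !adjmxM adjmxK mulmxA.
Qed.

Lemma qform_mulmx M N v : qform (adjmx N *m M *m N) v = qform M (N *m v).
Proof. by rewrite /qform adjmxM !mulmxA. Qed.

Lemma qform1_mulmx M v : qform 1%:M (M *m v) = qform (adjmx M *m M) v.
Proof. by rewrite -qform_mulmx mulmx1. Qed.

Lemma qform_diag (D : 'rV[C]_n) w :
  qform (diag_mx D) w = \sum_j D 0 j * (w j 0 * (w j 0)^*).
Proof. by rewrite /qform mxE; apply: eq_bigr => j _; rewrite mul_mx_diag !mxE; ring. Qed.

Lemma qform1 w : qform 1%:M w = \sum_j w j 0 * (w j 0)^*.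
Proof.
rewrite -diag_const_mx qform_diag; apply: eq_bigr => j _.
by rewrite mxE mul1r.
Qed.

Lemma qform1Z (c : C) w : qform 1%:M (c *: w) = c * c^* * qform 1%:M w.
Proof.
by rewrite /qform adjmxZ !mulmx1 -scalemxAl -scalemxAr scalerA mxE [c^* * c]mulrC.
Qed.

Lemma qform1_ge0 w : 0 <= qform 1%:M w.
Proof. by rewrite qform1 sumr_ge0 // => j _; exact: mul_conjC_ge0. Qed.

Lemma qform_diag_le (D : 'rV[C]_n) (c : C) w :
  (forall j, D 0 j <= c) -> qform (diag_mx D) w <= c * qform 1%:M w.
Proof.
move=> D_le; rewrite qform_diag qform1 mulr_sumr; apply: ler_sum => j _.
by rewrite ler_wpM2r ?mul_conjC_ge0.
Qed.

Lemma qform1_unitary (U : 'M[C]_n) w :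
  U \is unitarymx -> qform 1%:M (U *m w) = qform 1%:M w.
Proof. by move=> /mul_adjmx_unitarymx UU; rewrite qform1_mulmx UU. Qed.

End QuadraticForm.

Lemma herm_spectral n (P : 'M[C]_n) : herm P -> exists (U : 'M[C]_n) (D : 'rV[C]_n),
  [/\ U \is unitarymx, P = adjmx U *m diag_mx D *m U & forall j, D 0 j \is Num.real].
Proof.
move=> Ph; exists (spectralmx P), (spectral_diag P); split.
- exact: spectral_unitarymx.
- have /orthomx_spectralP {1}-> := hermitian_normalmx Ph.
  by rewrite invmx_unitary // spectral_unitarymx.
- by move=> j; have /mxOverP := hermitian_spectral_diag_real Ph; apply.
Qed.

Lemma unitary_diag_eigenvector n (U : 'M[C]_n) (D : 'rV[C]_n) j :
  U \is unitarymx -> exists u : 'cV[C]_n,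
  (adjmx U *m diag_mx D *m U) *m u = D 0 j *: u /\ qform 1%:M u = 1.
Proof.
move=> Uu; exists (adjmx U *m delta_mx j 0); split.
  rewrite -!mulmxA (mulmxA U) (unitarymxP Uu) mul1mx scalemxAr; congr (_ *m _).
  apply/matrixP=> a b; rewrite mul_diag_mx !mxE.
  by case: (eqVneq a j) => [->|]; rewrite ?mulr0 ?mulr1 //= andbF mulr0.
rewrite qform1_unitary ?trmxC_unitary // qform1 (bigD1 j) //= big1 ?addr0.
  by rewrite mxE !eqxx /= conjC1 mulr1.
by move=> i /negbTE ne; rewrite mxE ne mul0r.
Qed.

Lemma vnorm_sqr n (v : 'cV[C]_n) : ((vnorm v) ^+ 2)%:C%C = qform 1%:M v.
Proof.
rewrite /vnorm sqr_sqrtr; last by apply: sumr_ge0 => i _; rewrite addr_ge0 ?sqr_ge0.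
rewrite qform1 rmorph_sum; apply: eq_bigr => i _.
case: (v i 0) => a b; apply/eqP; rewrite eq_complex /=; simpc.
by rewrite /= [b * a]mulrC addNr.
Qed.

Lemma vnorm_le n (v : 'cV[C]_n) (r : R) :
  0 <= r -> qform 1%:M v <= (r ^+ 2)%:C%C -> vnorm v <= r.
Proof.
move=> r_ge0; rewrite -vnorm_sqr lecR.
by rewrite ler_pXn2r // nnegrE sqrtr_ge0.
Qed.

Lemma vnorm_eq n (v : 'cV[C]_n) (r : R) :
  0 <= r -> qform 1%:M v = (r ^+ 2)%:C%C -> vnorm v = r.
Proof.
move=> r_ge0; rewrite -vnorm_sqr => /complexI /eqP.
by rewrite eqrXn2 ?sqrtr_ge0 // => /eqP.
Qed.

Lemma opnorm_unitary_diag n (U : 'M[C]_n) (D : 'rV[C]_n) (d : R) i0 :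
  U \is unitarymx -> D 0 i0 = d%:C%C -> (forall j, 0 <= D 0 j <= d%:C%C) ->
  opnorm (adjmx U *m diag_mx D *m U) = d.
Proof.
move=> Uu Di0 D_bnd; set P := adjmx U *m diag_mx D *m U.
have d_ge0 : 0 <= d by rewrite -lecR -Di0; case/andP: (D_bnd i0).
have PP : adjmx P *m P = adjmx U *m diag_mx (\row_j D 0 j ^+ 2) *m U.
  have adjD : adjmx (diag_mx D) = diag_mx D.
    apply/matrixP=> a b; rewrite !mxE eq_sym; case: eqP => [->|_].
      by rewrite mulr1n conj_Creal // ger0_real //; case/andP: (D_bnd b).
    by rewrite mulr0n conjC0.
  rewrite /P !adjmxM adjmxK adjD !mulmxA -(mulmxA _ U) (unitarymxP Uu) mulmx1.
  congr (_ *m _); rewrite -mulmxA; congr (_ *m _).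
  apply/matrixP=> a b; rewrite mul_diag_mx !mxE.
  by case: eqP; rewrite ?mulr1n ?mulr0n ?mulr0 // expr2.
have Pv_le v : vnorm v <= 1 -> vnorm (P *m v) <= d.
  move=> v_le1; apply: vnorm_le => //.
  rewrite qform1_mulmx PP qform_mulmx.
  apply: (le_trans (qform_diag_le _ (c := (d ^+ 2)%:C%C) _)).
    move=> j; rewrite mxE rmorphXn /=; case/andP: (D_bnd j) => D0 Dd.
    by rewrite ler_pXn2r // nnegrE ?(le_trans D0 Dd).
  rewrite qform1_unitary // -[X in _ <= X]mulr1 ler_wpM2l ?ler0c ?sqr_ge0 //.
  by rewrite -vnorm_sqr -[1]/(1%:C%C) lecR exprn_ile1 ?sqrtr_ge0.
have [u [Pu u_unit]] := unitary_diag_eigenvector D i0 Uu.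
have u_le1 : vnorm u <= 1 by rewrite (vnorm_eq (r := 1)) // u_unit expr1n.
have Pu_d : vnorm (P *m u) = d.
  apply: vnorm_eq => //.
  by rewrite Pu qform1Z u_unit Di0 conj_Creal ?ger0_real ?ler0c // mulr1 -rmorphM expr2.
apply/le_anti/andP; split.
- by apply: ge_sup => [|_ [v /Pv_le v_le <-]]; first by exists d, u.
- by apply: ub_le_sup; [exists d => _ [v /Pv_le v_le <-] | exists u].
Qed.

Lemma psd_spectral_max m (P : 'M[C]_m.+1) : psd P ->
  exists (U : 'M[C]_m.+1) (D : 'rV[C]_m.+1) (d : R) (i0 : 'I_m.+1),
  [/\ U \is unitarymx, P = adjmx U *m diag_mx D *m U, D 0 i0 = d%:C%C
    & forall j, 0 <= D 0 j <= d%:C%C].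
Proof.
move=> [Ph P_ge0]; have [U [D [Uu defP D_real]]] := herm_spectral Ph.
have D_ge0 j : 0 <= D 0 j.
  have [u [Pu u_unit]] := unitary_diag_eigenvector D j Uu.
  by have := P_ge0 u; rewrite -/(qform P u) defP (qform_eigen Pu) u_unit mulr1.
pose i0 := Order.arg_max ord0 xpredT (fun i => complex.Re (D 0 i)).
exists U, D, (complex.Re (D 0 i0)), i0; split; rewrite ?RRe_real // => j.
rewrite D_ge0 -(RRe_real (D_real j)) -(RRe_real (D_real i0)) lecR /i0.
by case: arg_maxP => // i _; apply.
Qed.

Lemma psd_opnorm_eigenvector m (P : 'M[C]_m.+1) : psd P ->
  exists u, [/\ P *m u = (opnorm P)%:C%C *: u, qform 1%:M u = 1 & 0 <= opnorm P].
Proof.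
move=> /psd_spectral_max [U [D [d [i0 [Uu defP Di0 D_bnd]]]]].
have [u [Pu u_unit]] := unitary_diag_eigenvector D i0 Uu.
rewrite defP (opnorm_unitary_diag Uu Di0 D_bnd); exists u; split => //.
  by rewrite Pu Di0.
by rewrite -lecR -Di0; case/andP: (D_bnd i0).
Qed.

Lemma psd_qform_le_opnorm m (P : 'M[C]_m) v :
  psd P -> qform P v <= (opnorm P)%:C%C * qform 1%:M v.
Proof.
case: m P v => [|m] P v; first by rewrite /qform !mxE !big_ord0 mulr0.
move=> /psd_spectral_max [U [D [d [i0 [Uu defP Di0 D_bnd]]]]].
rewrite defP (opnorm_unitary_diag Uu Di0 D_bnd) qform_mulmx -(qform1_unitary v Uu).
by apply: qform_diag_le => j; case/andP: (D_bnd j).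
Qed.

Lemma conj_real_complex (x : R) : (x%:C%C)^* = x%:C%C.
Proof. by apply: conj_Creal; apply/complex_realP; exists x. Qed.

Lemma psdZ n (c : C) (M : 'M[C]_n) : 0 <= c -> psd M -> psd (c *: M).
Proof.
move=> c_ge0 [hM M_ge0]; split; first by apply: hermZ hM; rewrite conj_Creal ?ger0_real.
by move=> v; rewrite -/(qform _ v) qformZ; exact: mulr_ge0 c_ge0 (M_ge0 v).
Qed.

Lemma psd_shift_opnorm n (P Q : 'M[C]_n) (d : R) :
  psd P -> psd Q -> opnorm Q <= d -> psd (P - Q + d%:C%C *: 1%:M).
Proof.
move=> [hP P_ge0] pQ Qd; split.
  exact: hermD (hermD hP (hermN pQ.1)) (hermZ (conj_real_complex d) (herm1 n)).
move=> v; rewrite -/(qform _ v) !qformD qformN qformZ -addrA.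
apply: addr_ge0; first exact: P_ge0.
rewrite addrC subr_ge0 (le_trans (psd_qform_le_opnorm v pQ)) //.
by rewrite ler_wpM2r ?qform1_ge0 ?lecR.
Qed.

Lemma psdD n (M N : 'M[C]_n) : psd M -> psd N -> psd (M + N).
Proof.
move=> [hM M_ge0] [hN N_ge0]; split; first exact: hermD.
by move=> v; rewrite -/(qform _ v) qformD; exact: addr_ge0 (M_ge0 v) (N_ge0 v).
Qed.

Lemma psdB_opnorm0 n (P Q : 'M[C]_n) : psd P -> psd Q -> opnorm Q = 0 -> psd (P - Q).
Proof.
move=> pP pQ Q0; have := psd_shift_opnorm pP pQ (lexx (opnorm Q)).
by rewrite Q0 rmorph0 scale0r addr0.
Qed.

Lemma mulmx_eigenvector_eq0 n (M N : 'M[C]_n) (u : 'cV[C]_n) (c : C) :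
  N *m M = 0 -> M *m u = c *: u -> c != 0 -> N *m u = 0.
Proof.
move=> NM0 Mu c_neq0; have : c *: (N *m u) = 0.
  by rewrite scalemxAr -Mu mulmxA NM0 mul0mx.
by move/eqP; rewrite scaler_eq0 (negbTE c_neq0) => /eqP.
Qed.

Lemma jordan_decompN n (A Ap Am : 'M[C]_n) :
  jordan_decomp A Ap Am -> jordan_decomp (- A) Am Ap.
Proof.
move=> [pAp pAm defA ApAm]; split=> //; first by rewrite defA opprB.
have [/hermE hAp /hermE hAm] := (pAp.1, pAm.1).
by rewrite -hAm -hAp -adjmxM ApAm; apply/matrixP=> i j; rewrite !mxE conjC0.
Qed.

Lemma jordan_decomp_eigenvector n (A Ap Am : 'M[C]_n.+1) :
  jordan_decomp A Ap Am -> ~ nsd A ->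
  exists u, [/\ 0 < opnorm Ap, qform 1%:M u = 1 & qform A u = (opnorm Ap)%:C%C].
Proof.
move=> JA nnA; have [pAp pAm defA _] := JA; have [_ _ _ AmAp] := jordan_decompN JA.
have [u [Apu u_unit a_ge0]] := psd_opnorm_eigenvector pAp.
have a_neq0 : opnorm Ap != 0.
  apply: contra_notN nnA => /eqP a0; rewrite /nsd defA opprB.
  exact: psdB_opnorm0 pAm pAp a0.
have Amu : Am *m u = 0.
  by apply: mulmx_eigenvector_eq0 AmAp Apu _; rewrite fmorph_eq0.
exists u; split; first by rewrite lt0r a_neq0 a_ge0.
  exact: u_unit.
by rewrite defA qformD qformN (qform_eigen Apu) (qform_eq0 Amu) u_unit mulr1 subr0.
Qed.

Definition measure_prepare n k (u1 u2 : 'cV[C]_n) (M1 M2 : 'M[C]_k)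
  (X : 'M[C]_n) : 'M[C]_k := qform X u1 *: M1 + qform X u2 *: M2.

Section MeasurePrepare.
Variables (n k : nat) (u1 u2 : 'cV[C]_n) (M1 M2 : 'M[C]_k).

Lemma herm_linear_measure_prepare :
  herm M1 -> herm M2 -> herm_linear (measure_prepare u1 u2 M1 M2).
Proof.
move=> hM1 hM2; split=> [X hX | r X Y _ _].
  by apply: hermD; apply: hermZ => //; apply: qform_conj.
by rewrite /measure_prepare !qformD !qformZ !scalerDl scalerDr !scalerA addrACA.
Qed.

Lemma positive_measure_prepare :
  psd M1 -> psd M2 -> positive_map (measure_prepare u1 u2 M1 M2).
Proof.
move=> pM1 pM2 X [_ X_ge0].
exact: psdD (psdZ (X_ge0 u1) pM1) (psdZ (X_ge0 u2) pM2).
Qed.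

Lemma unital_measure_prepare : qform 1%:M u1 = 1 -> qform 1%:M u2 = 1 ->
  M1 + M2 = 1%:M -> unital_map (measure_prepare u1 u2 M1 M2).
Proof.
by move=> u1_unit u2_unit; rewrite /unital_map /measure_prepare u1_unit u2_unit !scale1r.
Qed.

End MeasurePrepare.

Lemma measure_prepare_interpolation n k (A : 'M[C]_n) (B Bp Bm : 'M[C]_k)
    (u1 u2 : 'cV[C]_n) (a b : R) :
  jordan_decomp B Bp Bm -> opnorm Bp <= a -> opnorm Bm <= b -> 0 < a -> 0 < b ->
  qform 1%:M u1 = 1 -> qform 1%:M u2 = 1 ->
  qform A u1 = a%:C%C -> qform A u2 = - b%:C%C ->
  exists Phi : 'M[C]_n -> 'M[C]_k,
    [/\ herm_linear Phi, positive_map Phi, unital_map Phi & Phi A = B].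
Proof.
move=> [pBp pBm defB _] leBp leBm a_gt0 b_gt0 u1_unit u2_unit qAu1 qAu2.
pose t := (a + b)^-1.
have t_ge0 : 0 <= t%:C%C by rewrite ler0c invr_ge0 ltW // addr_gt0.
have tab : t%:C%C * (a%:C%C + b%:C%C) = 1.
  by rewrite -rmorphD -rmorphM mulVf ?rmorph1 // gt_eqF // addr_gt0.
pose M1 := t%:C%C *: (B + b%:C%C *: 1%:M).
pose M2 := t%:C%C *: (- B + a%:C%C *: 1%:M).
have pM1 : psd M1 by rewrite /M1 defB; exact: psdZ t_ge0 (psd_shift_opnorm pBp pBm leBm).
have pM2 : psd M2.
  by rewrite /M2 defB opprB; exact: psdZ t_ge0 (psd_shift_opnorm pBm pBp leBp).
exists (measure_prepare u1 u2 M1 M2); split.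
- exact: herm_linear_measure_prepare pM1.1 pM2.1.
- exact: positive_measure_prepare pM1 pM2.
- apply: (unital_measure_prepare u1_unit u2_unit).
  by rewrite -scalerDr addrACA subrr add0r -scalerDl scalerA (addrC b%:C%C) tab scale1r.
- by rewrite /measure_prepare qAu1 qAu2; exact: shift_combination tab.
Qed.

End HermitianMatrices.

Theorem mainTheorem11 (R : realType) (n k : nat)
  (A : 'M[R[i]]_n) (B : 'M[R[i]]_k)
  (Ap Am : 'M[R[i]]_n) (Bp Bm : 'M[R[i]]_k) :
  herm A -> herm B ->
  ~ psd A -> ~ nsd A -> ~ psd B -> ~ nsd B ->
  jordan_decomp A Ap Am -> jordan_decomp B Bp Bm ->
  opnorm Bp <= opnorm Ap -> opnorm Bm <= opnorm Am ->
  exists Phi : 'M[R[i]]_n -> 'M[R[i]]_k,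
    [/\ herm_linear Phi, positive_map Phi, unital_map Phi & Phi A = B].
Proof.
move=> _ _ npA nnA _ _ JA JB leBp leBm.
case: n => [|n] in A Ap Am JA npA nnA leBp leBm *.
  case: npA; have -> : A = Ap by rewrite [A]flatmx0 [Ap]flatmx0.
  by have [pAp _ _ _] := JA; exact: pAp.
have [u1 [a_gt0 u1_unit qAu1]] := jordan_decomp_eigenvector JA nnA.
have nnNA : ~ nsd (- A) by rewrite /nsd opprK.
have [u2 [b_gt0 u2_unit qNAu2]] := jordan_decomp_eigenvector (jordan_decompN JA) nnNA.
have qAu2 : qform A u2 = - (opnorm Am)%:C%C by rewrite -qNAu2 qformN opprK.
exact: measure_prepare_interpolation JB leBp leBm a_gt0 b_gt0 u1_unit u2_unit qAu1 qAu2.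
Qed.
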